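(* Let $t\ge1$ be an integer and $\mathcal{I}\subseteq[K]$. Let $x,y\in\mathbb{R}^K$ with $x_i,y_i\in(0,1]$ for all $i\in\mathcal{I}$ and $\sum_{i\in\mathcal{I}}x_i=\sum_{i\in\mathcal{I}}y_i$, and suppose there is $c\in\mathbb{R}$ with $\nabla\phi^{t}_{\mathcal{I}}(y)=\nabla\phi^t_{\mathcal{I}}(x)-\hat\ell^t_{\mathcal{I}}+c\cdot\mathbf{1}_{\mathcal{I}}$. Then $\sum_{i\in\mathcal{I}}y_i^{4/3}\le8\sum_{i\in\mathcal{I}}x_i^{4/3}$.
   Context: $\phi^s(x)=-3K^{1/6}\sqrt{s}\sum_{i\in[K]}x_i^{2/3}$ (the $2/3$-Tsallis regularizer of Decoupled-Tsallis-INF) and $\phi^s_{\mathcal{I}}(x)=-3K^{1/6}\sqrt{s}\sum_{i\in\mathcal{I}}x_i^{2/3}$. For a vector $v$, $v_{\mathcal{I}}$ agrees with $v$ on $\mathcal{I}$ and is $0$ elsewhere; $\mathbf{1}_{\mathcal{I}}$ is the indicator vector of $\mathcal{I}$. $\hat\ell^t$ is the loss estimator of Decoupled-Tsallis-INF: $\hat\ell^t_i=\mathbb{1}\{j^t=i\}\ell^t_i/g^t_i$ for some $j^t\in[K]$, $\ell^t\in[0,1]^K$ and a probability vector $g^t$ with positive entries. *)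

From HB Require Import structures.
From mathcomp Require Import all_boot all_order all_algebra.
From mathcomp Require Import all_classical all_reals all_analysis.
Set Implicit Arguments. Unset Strict Implicit. Unset Printing Implicit Defensive.
Import Order.TTheory GRing.Theory Num.Theory.
Local Open Scope ring_scope.

Definition tsallisI (R : realType) (K : nat) (s : R) (I : {set 'I_K})
  (x : 'I_K -> R) : R :=
  - 3 * ((K%:R : R) `^ (6^-1)) * Num.sqrt s * \sum_(i in I) (x i `^ (2 / 3)).

Definition grad_vec (R : realType) (K : nat) (f : ('I_K -> R) -> R)
  (x : 'I_K -> R) : 'I_K -> R :=
  fun i => derive1 (fun u : R => f (fun k => x k + (if k == i then u else 0))) 0.

Definition restr_vec (R : realType) (K : nat) (I : {set 'I_K}) (v : 'I_K -> R)
  : 'I_K -> R := fun i => if i \in I then v i else 0.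

Definition ind_vec (R : realType) (K : nat) (I : {set 'I_K}) : 'I_K -> R :=
  fun i => if i \in I then 1 else 0.

Definition loss_est (R : realType) (K : nat) (j : 'I_K) (ell g : 'I_K -> R)
  : 'I_K -> R := fun i => if i == j then ell i / g i else 0.

From HB Require Import structures.
From mathcomp Require Import all_boot all_order all_algebra.
From mathcomp Require Import all_classical all_reals all_analysis.
From mathcomp Require Import ring lra.
Set Implicit Arguments.
Unset Strict Implicit.
Unset Printing Implicit Defensive.

Import Order.TTheory GRing.Theory Num.Theory.
Local Open Scope ring_scope.

(* Write x_i = p_i^3 and y_i = q_i^3. The i-th partial derivative of the
   regulariser is -D / p_i, so the hypothesis reads D / q_i = D / p_i + l_i - c
   with l >= 0 supported on the played arm j. Equal masses force c >= 0
   (otherwise every q_i < p_i), hence q_i >= p_i for all i <> j: only arm j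
   loses mass. The cube mass gained by the other arms is at most p_j^3, and as
   q^4 - p^4 <= 2 q (q^3 - p^3) it costs at most 2 q_k p_j^3 <= 4 max(p_k, p_j)^4
   in fourth powers, where q_k = max q; whence sum q^4 <= 5 sum p^4. *)

Section PowerSums.
Variable R : realFieldType.
Implicit Types (a b p q : R).

Lemma pow4_subr_le p q : 0 <= p <= q ->
  q ^+ 4 - p ^+ 4 <= 2 * q * (q ^+ 3 - p ^+ 3).
Proof.
case/andP=> p0 pq; rewrite -subr_ge0.
have -> : 2 * q * (q ^+ 3 - p ^+ 3) - (q ^+ 4 - p ^+ 4) =
          (q - p) * (q ^+ 3 + q ^+ 2 * p + q * p ^+ 2 - p ^+ 3) by ring.
apply: mulr_ge0; first by rewrite subr_ge0.
have q0 : 0 <= q by apply: le_trans pq.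
have : p ^+ 3 <= q ^+ 3 by rewrite lerXn2r.
have : 0 <= q ^+ 2 * p + q * p ^+ 2 by rewrite addr_ge0 ?mulr_ge0 ?exprn_ge0.
lra.
Qed.

Lemma le_2max_of_cube_le a b q : 0 <= a -> 0 <= b -> 0 <= q ->
  q ^+ 3 <= a ^+ 3 + b ^+ 3 -> q <= 2 * Num.max a b.
Proof.
move=> a0 b0 q0 hq; set m := Num.max a b.
have am : a <= m by rewrite /m le_max lexx.
have bm : b <= m by rewrite /m le_max lexx orbT.
have m0 : 0 <= m by apply: le_trans am.
have am3 : a ^+ 3 <= m ^+ 3 by rewrite lerXn2r.
have bm3 : b ^+ 3 <= m ^+ 3 by rewrite lerXn2r.
rewrite -(@ler_pXn2r _ 3) ?nnegrE ?mulr_ge0 // exprMn.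
have : 0 <= m ^+ 3 by rewrite exprn_ge0.
lra.
Qed.

Lemma sum_pow4_le (T : finType) (I : {set T}) (j : T) (p q : T -> R) :
  (forall i, i \in I -> 0 <= p i) -> (forall i, i \in I -> 0 <= q i) ->
  \sum_(i in I) p i ^+ 3 = \sum_(i in I) q i ^+ 3 ->
  (forall i, i \in I -> i != j -> p i <= q i) ->
  \sum_(i in I) q i ^+ 4 <= 5 * \sum_(i in I) p i ^+ 4.
Proof.
move=> p0 q0 cubeE.
wlog jI : j / j \in I => [hwlog pq|pq].
  have [jI|jNI] := boolP (j \in I); first exact: (hwlog j).
  have [->|[k kI]] := set_0Vmem I; first by rewrite !big_set0 mulr0.
  apply: (hwlog k) => // i iI _; apply: pq => //.
  by apply: contraNneq jNI => <-.
have [k /= kI qk_max] := @arg_maxP _ _ _ j (fun i => i \in I) q jI.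
set S := \sum_(i in I) p i ^+ 4.
have pS i : i \in I -> p i ^+ 4 <= S.
  move=> iI; rewrite /S (bigD1 i iI) /= lerDl.
  by apply: sumr_ge0 => l /andP[lI _]; rewrite exprn_ge0 ?p0.
have gain_ge0 i : i \in I -> i != j -> 0 <= q i ^+ 3 - p i ^+ 3.
  by move=> iI ij; rewrite subr_ge0 lerXn2r ?nnegrE ?p0 ?q0 ?pq.
have gainE : \sum_(i in I | i != j) (q i ^+ 3 - p i ^+ 3) = p j ^+ 3 - q j ^+ 3.
  by move: cubeE; rewrite sumrB (bigD1 j jI) [X in _ = X -> _](bigD1 j jI) /=; lra.
have gain_sum_ge0 : 0 <= \sum_(i in I | i != j) (q i ^+ 3 - p i ^+ 3).
  by apply: sumr_ge0 => i /andP[]; apply: gain_ge0.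
have qk_cube : q k ^+ 3 <= p k ^+ 3 + p j ^+ 3.
  have qj0 := exprn_ge0 3 (q0 _ jI).
  have [->|kj] := eqVneq k j; first by have := exprn_ge0 3 (p0 _ jI); lra.
  have : q k ^+ 3 - p k ^+ 3 <= p j ^+ 3 - q j ^+ 3.
    rewrite -gainE (bigD1 k) /=; last by rewrite kI kj.
    rewrite lerDl.
    by apply: sumr_ge0 => i /andP[/andP[iI ij] _]; apply: gain_ge0.
  lra.
have qk_pj : q k * p j ^+ 3 <= 2 * S.
  have := le_2max_of_cube_le (p0 _ kI) (p0 _ jI) (q0 _ kI) qk_cube.
  set m := Num.max (p k) (p j) => qk_m.
  have pj_m : p j <= m by rewrite /m le_max lexx orbT.
  have m0 : 0 <= m := le_trans (p0 _ jI) pj_m.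
  have pj_m3 : p j ^+ 3 <= m ^+ 3 by rewrite lerXn2r ?nnegrE ?p0.
  have mS : m ^+ 4 <= S by rewrite /m maxEle; case: ifP => _; apply: pS.
  apply: le_trans (_ : 2 * m * m ^+ 3 <= _).
    by apply: ler_pM => //; rewrite ?q0 ?exprn_ge0 ?p0.
  by rewrite -mulrA -exprS ler_pM2l.
have rest : \sum_(i in I | i != j) q i ^+ 4 <=
            \sum_(i in I | i != j) p i ^+ 4 + 2 * q k * (p j ^+ 3 - q j ^+ 3).
  rewrite -gainE mulr_sumr -big_split /= ler_sum // => i /andP[iI ij].
  have : q i ^+ 4 - p i ^+ 4 <= 2 * q i * (q i ^+ 3 - p i ^+ 3).
    by apply: pow4_subr_le; rewrite p0 ?pq.
  have : 2 * q i * (q i ^+ 3 - p i ^+ 3) <= 2 * q k * (q i ^+ 3 - p i ^+ 3).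
    by rewrite ler_wpM2r ?gain_ge0 // ler_wpM2l ?qk_max.
  lra.
have qj_pj : q j <= p j.
  by rewrite -(@ler_pXn2r _ 3) ?nnegrE ?p0 ?q0 //; lra.
have qj_pj4 : q j ^+ 4 <= p j ^+ 4 by rewrite lerXn2r ?nnegrE ?p0 ?q0.
have := mulr_ge0 (q0 _ kI) (exprn_ge0 3 (q0 _ jI)).
move: rest; rewrite (bigD1 j jI) /= [X in _ <= 5 * X](bigD1 j jI) /= -/S.
have : p j ^+ 4 + \sum_(i in I | i != j) p i ^+ 4 = S by rewrite /S (bigD1 j jI).
lra.
Qed.

Lemma le_of_dual_shift (T : finType) (I : {set T}) (D c : R) (l p q : T -> R) :
  0 < D -> (forall i, i \in I -> 0 < p i) -> (forall i, i \in I -> 0 < q i) ->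
  (forall i, i \in I -> 0 <= l i) ->
  (forall i, i \in I -> D / q i = D / p i + l i - c) ->
  \sum_(i in I) p i ^+ 3 = \sum_(i in I) q i ^+ 3 ->
  forall i, i \in I -> l i = 0 -> p i <= q i.
Proof.
move=> D0 p0 q0 l0 dualE cubeE i iI li0.
have c0 : 0 <= c.
  rewrite leNgt; apply/negP => c_lt0.
  have qp k : k \in I -> q k < p k.
    move=> kI; have : D / p k < D / q k by rewrite dualE //; have := l0 _ kI; lra.
    by rewrite ltr_pM2l // ltf_pV2 ?posrE ?p0 ?q0.
  have : \sum_(k in I) q k ^+ 3 < \sum_(k in I) p k ^+ 3.
    apply: ltr_sum => [|k kI]; first by apply/hasP; exists i; rewrite ?mem_index_enum.
    by rewrite ltrXn2r ?qp // ltW ?q0.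
  by rewrite cubeE ltxx.
have : D / q i <= D / p i by rewrite dualE // li0; lra.
by rewrite ler_pM2l // lef_pV2 ?posrE ?p0 ?q0.
Qed.

End PowerSums.

Section TsallisStep.
Variable R : realType.

Lemma derive1_shift0 (f : R -> R) (b : R) :
  derive1 (fun u => f (b + u)) 0 = derive1 f b.
Proof.
rewrite !derive1E /derive addr0.
set F := (fun h : R => _ *: (f (b + _) - _)).
set G := (fun h : R => _ *: (f (_ + b) - _)).
by rewrite (_ : F = G) //; apply/funext => h; rewrite /F /G /= addr0 [b + _]addrC.
Qed.

Lemma derive1_powR_affine (C A a b : R) : 0 < b ->
  derive1 (fun z : R => C * (z `^ a + A)) b = C * (a * b `^ (a - 1)).
Proof.
move=> b0; have := is_derive1_powR a b0 => dpow.
have -> : (fun z : R => C * (z `^ a + A)) = C \*: (@powR R ^~ a + cst A) by [].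
by rewrite derive1E derive_val addr0.
Qed.

Lemma grad_tsallisI (K : nat) (s : R) (I : {set 'I_K})
  (x : 'I_K -> R) i : i \in I -> 0 < x i ->
  grad_vec (tsallisI s I) x i =
  - (2 * (K%:R : R) `^ 6^-1 * Num.sqrt s) / x i `^ (1 / 3).
Proof.
move=> iI xi0; rewrite /grad_vec /tsallisI.
set C := - 3 * _ * _; set A := \sum_(k in I | k != i) x k `^ (2 / 3).
transitivity (derive1 (fun u => C * ((x i + u) `^ (2 / 3) + A)) 0).
  congr (derive1 _ 0); apply/funext => u; rewrite (bigD1 i iI) /= eqxx.
  congr (C * (_ + _)); apply: eq_bigr => k /andP[_ /negbTE ->].
  by rewrite addr0.
rewrite (derive1_shift0 (fun z => C * (z `^ (2 / 3) + A))).
rewrite derive1_powR_affine //.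
have -> : (2 / 3 - 1 : R) = - (1 / 3) by field.
rewrite powRN /C; field.
by rewrite gt_eqF // powR_gt0.
Qed.

Lemma powR_exprn (v r : R) n : (v `^ r) ^+ n = v `^ (r * n%:R).
Proof. by rewrite powRrM powR_mulrn ?powR_ge0. Qed.

Lemma powR13_expr3 (v : R) : 0 <= v -> (v `^ (1 / 3)) ^+ 3 = v.
Proof. by move=> v0; rewrite powR_exprn (_ : 1 / 3 * 3%:R = 1) ?powRr1 //; field. Qed.

Lemma powR43E (v : R) : v `^ (4 / 3) = (v `^ (1 / 3)) ^+ 4.
Proof. by rewrite powR_exprn; congr (_ `^ _); field. Qed.

End TsallisStep.

Theorem corollary1 (R : realType) (K : nat) (t : nat) (I : {set 'I_K})
  (x y : 'I_K -> R) (j : 'I_K) (ell g : 'I_K -> R) (c : R) :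
  (1 <= t)%N ->
  (forall i, 0 <= ell i <= 1) ->
  (forall i, 0 < g i) ->
  \sum_i g i = 1 ->
  (forall i, i \in I -> 0 < x i <= 1) ->
  (forall i, i \in I -> 0 < y i <= 1) ->
  \sum_(i in I) x i = \sum_(i in I) y i ->
  grad_vec (tsallisI t%:R I) y =
    (fun i => grad_vec (tsallisI t%:R I) x i - restr_vec I (loss_est j ell g) i + c * ind_vec R I i) ->
  \sum_(i in I) (y i `^ (4 / 3)) <= 8 * \sum_(i in I) (x i `^ (4 / 3)).
Proof.
move=> t1 ell01 g0 _ hx hy sumE gradE.
have x0 i : i \in I -> 0 < x i by move/hx/andP=> [].
have y0 i : i \in I -> 0 < y i by move/hy/andP=> [].
set p := fun i => x i `^ (1 / 3); set q := fun i => y i `^ (1 / 3).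
have p0 i : i \in I -> 0 < p i by move=> iI; apply/powR_gt0/x0.
have q0 i : i \in I -> 0 < q i by move=> iI; apply/powR_gt0/y0.
set D := 2 * (K%:R : R) `^ 6^-1 * Num.sqrt t%:R.
have D0 : 0 < D.
  rewrite !mulr_gt0 ?powR_gt0 ?sqrtr_gt0 ?ltr0n //.
  exact: leq_ltn_trans (ltn_ord j).
set l := loss_est j ell g.
have l0 i : 0 <= l i.
  rewrite /l /loss_est; case: eqP => // _.
  by case/andP: (ell01 i) => ell0 _; rewrite divr_ge0 ?(ltW (g0 i)).
have dualE i : i \in I -> D / q i = D / p i + l i - c.
  move=> iI; have := congr1 (fun f => f i) gradE => /=.
  rewrite !grad_tsallisI ?x0 ?y0 // /restr_vec /ind_vec iI mulr1 -/D -/(p i) -/(q i).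
  rewrite -/l !mulNr; lra.
have cubeE : \sum_(i in I) p i ^+ 3 = \sum_(i in I) q i ^+ 3.
  rewrite (eq_bigr _ (fun i iI => powR13_expr3 (ltW (x0 i iI)))).
  by rewrite (eq_bigr _ (fun i iI => powR13_expr3 (ltW (y0 i iI)))) sumE.
have pq i : i \in I -> i != j -> p i <= q i.
  move=> iI ij; apply: (le_of_dual_shift D0 p0 q0 _ dualE cubeE) => //.
  by rewrite /l /loss_est (negbTE ij).
rewrite !(eq_bigr _ (fun i _ => powR43E _)) -/p -/q.
apply: le_trans (sum_pow4_le _ _ cubeE pq) _.
- by move=> i /p0/ltW.
- by move=> i /q0/ltW.
by apply: ler_wpM2r; rewrite ?ler_nat // sumr_ge0 // => i _; rewrite exprn_ge0 ?powR_ge0.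
Qed.
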